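(* Let $M=(W,\bm{\Box},V)$ be a transitive, monotonic and regular neighborhood model, $\Sigma$ a set of formulas closed under subformulas, and $M^{T}_f$ the transitive filtration of $M$ through $\Sigma$. Then $M^{T\bullet}_f=(W_f,\bm{\Box}^{T\bullet}_f,V_f)$ is a filtration of $M$ through $\Sigma$, i.e. $\bm{\Box}^{T\bullet}_f\widetilde{|\varphi|}_M=\widetilde{|\Box\varphi|}_M$ for every formula $\Box\varphi\in\Sigma$.
   Context: A neighborhood model is $M=(W,\bm{\Box},V)$ with $W\neq\varnothing$, $\bm{\Box}:\mathcal P(W)\to\mathcal P(W)$, $V:Var\to\mathcal P(W)$; truth sets: $|p|_M=V(p)$, $|\neg\varphi|_M=W\setminus|\varphi|_M$, $|\varphi\wedge\psi|_M=|\varphi|_M\cap|\psi|_M$, $|\Box\varphi|_M=\bm{\Box}|\varphi|_M$. $M$ is transitive if $\bm{\Box}X\subseteq\bm{\Box}\bm{\Box}X$, monotonic if $X\subseteq Y\Rightarrow\bm{\Box}X\subseteq\bm{\Box}Y$, regular if $\bm{\Box}X\cap\bm{\Box}Y\subseteq\bm{\Box}(X\cap Y)$, for all $X,Y\subseteq W$. For $\Sigma$ closed under subformulas, $w\sim v$ iff $w,v$ satisfy the same formulas of $\Sigma$; $\widetilde w$ is the class of $w$, $W_f=\{\widetilde w:w\in W\}$, $\widetilde X=\{\widetilde w:w\in X\}$, $V_f(p)=\widetilde{|p|}_M$. A filtration of $M$ through $\Sigma$ is a model $(W_f,\bm{\Box}_f,V_f)$ with $\bm{\Box}_f\widetilde{|\varphi|}_M=\widetilde{|\Box\varphi|}_M$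 whenever $\Box\varphi\in\Sigma$. The minimal filtration has $\bm{\Box}^{-}_fX=\widetilde{|\Box\varphi|}_M$ if $X=\widetilde{|\varphi|}_M$ for some formula $\Box\varphi\in\Sigma$, and $\varnothing$ otherwise. For a function $\bm{\Box}':\mathcal P(U)\to\mathcal P(U)$: $\widehat{\bm{\Box}'}X=X$ if $X=\bm{\Box}'Y$ for some $Y$, else $\varnothing$; $\bm{\Box}'^{\#}X=\bigcup\{\bm{\Box}'Y:Y\subseteq X\}$; $\bm{\Box}'^{*}X=\bigcup\{\bm{\Box}'X_1\cap\dots\cap\bm{\Box}'X_n:n\ge1,\ X=X_1\cap\dots\cap X_n\}$; $\bm{\Box}'^{\bullet}=\bm{\Box}'^{*\#}$. The transitive filtration has $\bm{\Box}^{T}_fX=\bm{\Box}^{-}_fX\cup\widehat{\bm{\Box}^{-}_f}X$, and $\bm{\Box}^{T\bullet}_f=(\bm{\Box}^{T}_f)^{\bullet}$. *)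

From Stdlib Require Import List.
Import ListNotations.

Definition pset (T : Type) := T -> Prop.
Definition subset {T} (X Y : pset T) : Prop := forall x, X x -> Y x.
Definition cap {T} (X Y : pset T) : pset T := fun x => X x /\ Y x.
Definition cup {T} (X Y : pset T) : pset T := fun x => X x \/ Y x.
Definition compl {T} (X : pset T) : pset T := fun x => ~ X x.

Inductive form : Type :=
| Var : nat -> form
| Neg : form -> form
| And : form -> form -> form
| Box : form -> form.

(* Neighborhood model (W, Box, V); nonemptiness of W is a separate hypothesis. *)
Record nmodel := {
  carrier : Type;
  nbox : pset carrier -> pset carrier;
  val : nat -> pset carrier }.

Fixpoint truth (M : nmodel) (f : form) : pset (carrier M) :=
  match f with
  | Var p => val M p
  | Neg g => compl (truth M g)
  | And g h => cap (truth M g) (truth M h)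
  | Box g => nbox M (truth M g)
  end.

Definition transitive_model (M : nmodel) : Prop :=
  forall X, subset (nbox M X) (nbox M (nbox M X)).
Definition monotonic_model (M : nmodel) : Prop :=
  forall X Y, subset X Y -> subset (nbox M X) (nbox M Y).
Definition regular_model (M : nmodel) : Prop :=
  forall X Y, subset (cap (nbox M X) (nbox M Y)) (nbox M (cap X Y)).

Definition subform_closed (Sigma : pset form) : Prop :=
  (forall g, Sigma (Neg g) -> Sigma g) /\
  (forall g h, Sigma (And g h) -> Sigma g /\ Sigma h) /\
  (forall g, Sigma (Box g) -> Sigma g).

Section Filtration.
Variables (M : nmodel) (Sigma : pset form).

Definition sim (w v : carrier M) : Prop :=
  forall f, Sigma f -> (truth M f w <-> truth M f v).

Definition cls (w : carrier M) : pset (carrier M) := sim w.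

Definition Wf : Type := { C : pset (carrier M) | exists w, C = cls w }.

Definition tilde (X : pset (carrier M)) : pset Wf :=
  fun c => exists w, X w /\ proj1_sig c = cls w.

Definition Vf (p : nat) : pset Wf := tilde (val M p).

Definition box_min (X : pset Wf) : pset Wf :=
  fun c => exists f, Sigma (Box f) /\ X = tilde (truth M f) /\
                     tilde (truth M (Box f)) c.

End Filtration.

Section Ops.
Variables (U : Type) (bx : pset U -> pset U).

Definition box_hat (X : pset U) : pset U :=
  fun u => (exists Y, X = bx Y) /\ X u.

Definition box_sharp (X : pset U) : pset U :=
  fun u => exists Y, subset Y X /\ bx Y u.

Definition bigcap_list (Xs : list (pset U)) : pset U :=
  fun u => Forall (fun Y => Y u) Xs.

Definition box_star (X : pset U) : pset U :=
  fun u => exists Xs : list (pset U), Xs <> [] /\ X = bigcap_list Xs /\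
           Forall (fun Y => bx Y u) Xs.
End Ops.

Definition box_bullet {U} (bx : pset U -> pset U) : pset U -> pset U :=
  box_sharp U (box_star U bx).

Definition box_T (M : nmodel) (Sigma : pset form) (X : pset (Wf M Sigma)) :=
  cup (box_min M Sigma X) (box_hat (Wf M Sigma) (box_min M Sigma) X).

Definition box_T_bullet (M : nmodel) (Sigma : pset form) : pset (Wf M Sigma) -> pset (Wf M Sigma) :=
  box_bullet (box_T M Sigma).

Definition is_filtration (M : nmodel) (Sigma : pset form)
  (bx : pset (Wf M Sigma) -> pset (Wf M Sigma)) : Prop :=
  forall f, Sigma (Box f) ->
    bx (tilde M Sigma (truth M f)) = tilde M Sigma (truth M (Box f)).

(** A point [~w] of [box_T_bullet] at [tilde |phi|] comes from finitely many
    sets [X_i] with [~w] in [box_T X_i] and [X_1 ∩ ... ∩ X_n ⊆ tilde |phi|].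
    Each [X_i] is [tilde |psi_i|] with [w ∈ Box |psi_i|]: directly for the
    minimal part, and for the hat part [X_i = tilde |Box psi|] with
    [w ∈ Box |psi| ⊆ Box Box |psi|] by transitivity.  Regularity gives
    [w ∈ Box (|psi_1| ∩ ... ∩ |psi_n|)], this intersection lies in [|phi|]
    because [phi ∈ Sigma], and monotonicity yields [w ∈ Box |phi|].  The
    converse inclusion holds because [box_min ⊆ box_T ⊆ box_T_bullet]. *)

From Stdlib Require Import List FunctionalExtensionality PropExtensionality.
Import ListNotations.

Lemma pset_ext {T} (X Y : pset T) : (forall x, X x <-> Y x) -> X = Y.
Proof.
  intro H. extensionality x. apply propositional_extensionality, H.
Qed.

Lemma bigcap_list_singleton {U} (X : pset U) : bigcap_list U [X] = X.
Proof.
  apply pset_ext; intro u. unfold bigcap_list. rewrite Forall_cons_iff. intuition.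
Qed.

Lemma box_bullet_inflationary {U} (bx : pset U -> pset U) X :
  subset (bx X) (box_bullet bx X).
Proof.
  intros u Hu. exists X. split; [intros x Hx; exact Hx |].
  exists [X]. repeat split.
  - discriminate.
  - symmetry. apply bigcap_list_singleton.
  - repeat constructor. exact Hu.
Qed.

Section RegularModel.
Variable M : nmodel.
Hypothesis Hreg : regular_model M.

Lemma regular_bigcap_preimage {U} (m : carrier M -> U) w (Xs : list (pset U)) :
  Xs <> [] ->
  Forall (fun X => exists P, nbox M P w /\ subset P (fun v => X (m v))) Xs ->
  exists P, nbox M P w /\ subset P (fun v => bigcap_list U Xs (m v)).
Proof.
  intros Hne HXs. induction HXs as [|X Xs [P [HP HPX]] _ IH]; [easy |].
  destruct Xs as [|X' Xs].
  - exists P. split; [exact HP |]. intros v Hv.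
    apply Forall_cons; [exact (HPX v Hv) | constructor].
  - destruct IH as [Q [HQ HQXs]]; [discriminate |].
    exists (cap P Q). split; [apply Hreg; split; assumption |].
    intros v [HPv HQv]. apply Forall_cons; [exact (HPX v HPv) | exact (HQXs v HQv)].
Qed.

End RegularModel.

Section Filtration.
Variables (M : nmodel) (Sigma : pset form).
Hypothesis Sigma_box_sub : forall g, Sigma (Box g) -> Sigma g.

Definition wclass (w : carrier M) : Wf M Sigma :=
  exist _ (cls M Sigma w) (ex_intro _ w eq_refl).

Lemma wclass_surj (c : Wf M Sigma) : exists w, c = wclass w.
Proof.
  destruct c as [C [w E]]. subst C. exists w. reflexivity.
Qed.

Lemma sim_of_cls_eq w v : cls M Sigma w = cls M Sigma v -> sim M Sigma w v.
Proof.
  intro E. assert (Hv : cls M Sigma v v) by (intros f _; reflexivity).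
  rewrite <- E in Hv. exact Hv.
Qed.

Lemma tilde_truth_wclass g w :
  Sigma g -> tilde M Sigma (truth M g) (wclass w) <-> truth M g w.
Proof.
  intro Hg. split.
  - intros [v [Hv E]]. apply (sim_of_cls_eq w v E g Hg). exact Hv.
  - intro Hw. exists w. split; [exact Hw | reflexivity].
Qed.

Lemma tilde_truth_inj g g' : Sigma g -> Sigma g' ->
  tilde M Sigma (truth M g) = tilde M Sigma (truth M g') -> truth M g = truth M g'.
Proof.
  intros Hg Hg' E. apply pset_ext; intro w.
  rewrite <- (tilde_truth_wclass g w Hg), <- (tilde_truth_wclass g' w Hg'), E.
  reflexivity.
Qed.

Lemma box_min_tilde_truth g : Sigma (Box g) ->
  box_min M Sigma (tilde M Sigma (truth M g)) = tilde M Sigma (truth M (Box g)).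
Proof.
  intro Hg. apply pset_ext; intro c. split.
  - intros [g' [Hg' [E Hc]]].
    apply tilde_truth_inj in E; [| apply Sigma_box_sub; assumption ..].
    simpl. rewrite E. exact Hc.
  - intro Hc. exists g. auto.
Qed.

Lemma box_T_wclass_inv X w : transitive_model M ->
  box_T M Sigma X (wclass w) ->
  exists h, Sigma h /\ X = tilde M Sigma (truth M h) /\ nbox M (truth M h) w.
Proof.
  intros Htr [[g [Hg [E Hw]]] | [[Z EZ] Hw]].
  - exists g. rewrite tilde_truth_wclass in Hw by exact Hg. auto.
  - rewrite EZ in Hw. destruct Hw as [g [Hg [-> Hw]]].
    rewrite box_min_tilde_truth in EZ by exact Hg.
    rewrite tilde_truth_wclass in Hw by exact Hg.
    exists (Box g). split; [exact Hg |]. split; [exact EZ | apply Htr, Hw].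
Qed.

Lemma box_T_bullet_wclass_inv X w : transitive_model M -> regular_model M ->
  box_T_bullet M Sigma X (wclass w) ->
  exists P, nbox M P w /\ subset P (fun v => X (wclass v)).
Proof.
  intros Htr Hreg [Y [HYX [Xs [Hne [-> HXs]]]]].
  destruct (regular_bigcap_preimage M Hreg wclass w Xs Hne) as [P [HP HPY]].
  - eapply Forall_impl; [| exact HXs]. intros X' HX'.
    destruct (box_T_wclass_inv X' w Htr HX') as [h [Hh [-> Hw]]].
    exists (truth M h). split; [exact Hw |].
    intros v Hv. apply tilde_truth_wclass; assumption.
  - exists P. split; [exact HP |]. intros v Hv. apply HYX, HPY, Hv.
Qed.

End Filtration.

Theorem mainTheorem12 (M : nmodel) (Sigma : pset form) :
  inhabited (carrier M) ->
  transitive_model M -> monotonic_model M -> regular_model M ->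
  subform_closed Sigma ->
  is_filtration M Sigma (box_T_bullet M Sigma).
Proof.
  intros _ Htr Hmon Hreg [_ [_ Hsub]] f Hf.
  apply pset_ext; intro c. destruct (wclass_surj M Sigma c) as [w ->].
  rewrite tilde_truth_wclass by exact Hf. split.
  - intro Hw.
    destruct (box_T_bullet_wclass_inv M Sigma Hsub _ w Htr Hreg Hw) as [P [HP HPf]].
    apply (Hmon P); [| exact HP].
    intros v Hv. apply (tilde_truth_wclass M Sigma f v (Hsub f Hf)), HPf, Hv.
  - intro Hw. apply box_bullet_inflationary. left.
    rewrite (box_min_tilde_truth M Sigma Hsub f Hf).
    apply tilde_truth_wclass; assumption.
Qed.
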